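(* Let $i\ge 3$ and $k\ge 3$ be integers. Then: (a) $g_1(L_i,L_{i+2},L_{i+k})=(2L_i-1)L_{i+2}-L_i$ whenever $k\ge i+4$; (b) $g_1(L_i,L_{i+2},L_{2i+3})=(F_{i+3}-1)L_{i+2}-L_i$; (c) $g_1(L_i,L_{i+2},L_{2i+2})=(3F_{i-1}-1)L_{i+2}+L_{2i+2}-L_i$; (d) if $r=\lfloor (L_i-1)/F_k\rfloor\ge 1$ (equivalently $k\le i+1$), then $$g_1(L_i,L_{i+2},L_{i+k})=\begin{cases}(L_i-rF_k-1)L_{i+2}+(r+1)L_{i+k}-L_i & \text{if } (L_i-rF_k)L_{i+2}\ge F_{k-2}L_i,\\ (F_k-1)L_{i+2}+rL_{i+k}-L_i & \text{if } (L_i-rF_k)L_{i+2}< F_{k-2}L_i.\end{cases}$$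
   Context: Fibonacci numbers: $F_0=0$, $F_1=1$, $F_n=F_{n-1}+F_{n-2}$. Lucas numbers: $L_0=2$, $L_1=1$, $L_n=L_{n-1}+L_{n-2}$. For positive integers $a_1,\dots,a_l$ with $\gcd(a_1,\dots,a_l)=1$ and an integer $n$, let $d(n;a_1,\dots,a_l)$ be the number of tuples $(x_1,\dots,x_l)$ of nonnegative integers with $a_1x_1+\dots+a_lx_l=n$. For a nonnegative integer $p$, the $p$-Frobenius number $g_p(a_1,\dots,a_l)$ is the largest integer $n$ with $d(n;a_1,\dots,a_l)\le p$. *)

From mathcomp Require Import all_boot all_order all_algebra.
Set Implicit Arguments. Unset Strict Implicit. Unset Printing Implicit Defensive.
Import Order.TTheory GRing.Theory Num.Theory.

Fixpoint fib (n : nat) : nat :=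
  match n with
  | 0 => 0
  | 1 => 1
  | (m.+1 as p).+1 => fib p + fib m
  end.

Fixpoint lucas (n : nat) : nat :=
  match n with
  | 0 => 2
  | 1 => 1
  | (m.+1 as p).+1 => lucas p + lucas m
  end.

(* Since all a_i are positive
   (standing assumption), every x_i is at most n, so it suffices to range
   over x_i in {0,...,n}. *)
Definition dnat (a : seq nat) (n : nat) : nat :=
  #|[set x : {ffun 'I_(size a) -> 'I_n.+1} |
       \sum_(j < size a) nth 0 a j * x j == n]|.

Definition dcount (a : seq nat) (n : int) : nat :=
  match n with
  | Posz m => dnat a m
  | Negz _ => 0
  end.

Definition is_pFrobenius (p : nat) (a : seq nat) (g : int) : Prop :=
  (dcount a g <= p)%N /\ (forall n : int, (g < n)%R -> (p < dcount a n)%N).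

From mathcomp Require Import all_boot all_order all_algebra.
From mathcomp Require Import zify ring.
Import Order.TTheory GRing.Theory Num.Theory.

Set Implicit Arguments.
Unset Strict Implicit.
Unset Printing Implicit Defensive.

(* Write a = L_i, b = L_(i+2), c = L_(i+k), p = F_k and q = F_(k-2).  The
   identity F_k L_(i+2) = L_(i+k) + F_(k-2) L_i reads c + q a = p b, so c = p b
   modulo a.  A representation n = a x + b y + c z is determined by the pair
   (y, z), whose weight b y + c z is at most n and congruent to n modulo a; as a
   and b are coprime, this congruence only depends on the level y + p z modulo a.
   So n is the 1-Frobenius number as soon as n has a single such pair while every
   residue class of levels contains two pairs of weight at most n + a.  The cases
   of the theorem are p >= 2a, a < p <= 2a and p <= a; in each one the two
   cheapest pairs of a class are (Y, 0) and a pair of level Y + a, or two pairs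
   (y, z + 1) and (y + p, z) of the same level.  Uniqueness uses that a pair of
   level N has weight b N - q a z, and at least c N / p. *)

Lemma fibSS n : fib n.+2 = fib n.+1 + fib n. Proof. by []. Qed.

Lemma lucasSS n : lucas n.+2 = lucas n.+1 + lucas n. Proof. by []. Qed.

Lemma leq_fib m n : m <= n -> fib m <= fib n.
Proof.
move/subnK <-; elim: (n - m) => // d IH; rewrite addSn.
by apply: leq_trans IH _; case: (d + m) => //= e; rewrite leq_addr.
Qed.

Lemma fib_gt0 n : 0 < fib n.+1.
Proof. exact: (@leq_fib 1 n.+1). Qed.

Lemma double_fib_le n : 2 * fib n.-2 <= fib n.
Proof. by case: n => [|[|n]] //; have := leq_fib (leqnSn n); rewrite /=; lia. Qed.

Lemma double_lucas_le n : 0 < n -> 2 * lucas n <= lucas (n + 2).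
Proof. by case: n => // n _; rewrite addn2 /=; lia. Qed.

Lemma lucas_fib n : lucas n.+1 = fib n + fib n.+2.
Proof.
suff [] : lucas n.+1 = fib n + fib n.+2 /\ lucas n.+2 = fib n.+1 + fib n.+3 by [].
elim: n => [|n [IH1 IH2]] //; split => //.
by rewrite lucasSS IH1 IH2 !fibSS; lia.
Qed.

Lemma lucas_gt0 n : 0 < lucas n.
Proof. by case: n => // n; rewrite lucas_fib addn_gt0 fib_gt0 orbT. Qed.

Lemma fib_mul_lucas m n : fib n.+2 * lucas m.+2 = lucas (m + n.+2) + fib n * lucas m.
Proof.
suff [] : fib n.+2 * lucas m.+2 = lucas (m + n.+2) + fib n * lucas m /\
          fib n.+3 * lucas m.+2 = lucas (m + n.+3) + fib n.+1 * lucas m by [].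
elim: n => [|n [IH1 IH2]].
  by rewrite !addnS addn0 /=; lia.
split=> //; rewrite fibSS mulnDl IH1 IH2 fibSS mulnDl !addnS !lucasSS; lia.
Qed.

Lemma coprime_lucasS n : coprime (lucas n) (lucas n.+1).
Proof. by elim: n => // n IH; rewrite /coprime /= gcdnDl gcdnC. Qed.

Lemma coprime_lucas_add2 n : coprime (lucas n) (lucas (n + 2)).
Proof. by rewrite addn2 /coprime /= gcdnDr; exact: coprime_lucasS. Qed.

Lemma sum_nth3 a b c (f : 'I_3 -> nat) :
  \sum_(j < 3) nth 0 [:: a; b; c] j * f j =
  a * f (Ordinal (isT : 0 < 3)) + b * f (Ordinal (isT : 1 < 3)) + c * f (Ordinal (isT : 2 < 3)).
Proof.
rewrite !big_ord_recl big_ord0 addn0 addnA /=.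
have -> : (lift ord0 (lift ord0 ord0) : 'I_3) = Ordinal (isT : 2 < 3) by apply: val_inj.
have -> : (lift ord0 ord0 : 'I_3) = Ordinal (isT : 1 < 3) by apply: val_inj.
by have -> : (ord0 : 'I_3) = Ordinal (isT : 0 < 3) by apply: val_inj.
Qed.

Lemma dnat3_gt1 a b c m x1 y1 z1 x2 y2 z2 : 0 < a -> 0 < b -> 0 < c ->
  a * x1 + b * y1 + c * z1 = m -> a * x2 + b * y2 + c * z2 = m ->
  (y1, z1) != (y2, z2) -> 1 < dnat [:: a; b; c] m.
Proof.
move=> a0 b0 c0 e1 e2 ne; apply/card_gt1P.
pose t x y z : {ffun 'I_3 -> 'I_m.+1} := [ffun j : 'I_3 => inord (nth 0 [:: x; y; z] j)].
have tE x y z : a * x + b * y + c * z = m ->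
    t x y z \in [set f : {ffun 'I_3 -> 'I_m.+1} | \sum_(j < 3) nth 0 [:: a; b; c] j * f j == m].
  move=> e; rewrite inE (sum_nth3 a b c) !ffunE /= !inordK //; nia.
exists (t x1 y1 z1), (t x2 y2 z2); split; [exact: tE | exact: tE |].
apply: contra ne => /eqP/ffunP tt.
have := congr1 val (tt (Ordinal (isT : 1 < 3))).
have := congr1 val (tt (Ordinal (isT : 2 < 3))).
by rewrite !ffunE /= !inordK; [move=> -> -> | nia..].
Qed.

Lemma dnat3_le1 a b c m :
  (forall x y z x' y' z', a * x + b * y + c * z = m -> a * x' + b * y' + c * z' = m ->
     (x, y, z) = (x', y', z')) ->
  dnat [:: a; b; c] m <= 1.
Proof.
move=> uniq_rep; apply/card_le1_eqP => f g.
rewrite !inE !(sum_nth3 a b c) => /eqP ef /eqP eg.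
case: (uniq_rep _ _ _ _ _ _ ef eg) => e0 e1 e2.
apply/ffunP => -[[|[|[|j]]] lt_j3] //; apply: val_inj.
- by rewrite (_ : Ordinal lt_j3 = Ordinal (isT : 0 < 3)) //; apply: val_inj.
- by rewrite (_ : Ordinal lt_j3 = Ordinal (isT : 1 < 3)) //; apply: val_inj.
- by rewrite (_ : Ordinal lt_j3 = Ordinal (isT : 2 < 3)) //; apply: val_inj.
Qed.

Lemma is_pFrobenius_nat p s (n : nat) :
  dnat s n <= p -> (forall m, n < m -> p < dnat s m) -> is_pFrobenius p s n.
Proof. by move=> le_n gt_n; split=> // -[m|m] //; rewrite ltz_nat; apply: gt_n. Qed.

Lemma coprime_modMl a b m n : coprime a b -> b * m = b * n %[mod a] -> m = n %[mod a].
Proof.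
move=> co_ab; wlog le_nm : m n / n <= m => [hw|].
  by case: (leqP n m) => [/hw//|/ltnW le_mn /esym/(hw _ _ le_mn)].
move/eqP; rewrite eqn_mod_dvd ?leq_mul2l ?le_nm ?orbT // -mulnBr Gauss_dvdr //.
by rewrite -eqn_mod_dvd // => /eqP.
Qed.

Lemma coprime_modM_surj a b m : 0 < a -> coprime a b ->
  exists2 Y, Y < a & b * Y = m %[mod a].
Proof.
move=> a0 co_ab; have [u _] := Bezoutl b a0; rewrite (eqP co_ab) => /dvdnP [k inv_u].
exists ((u * (a - 1) * m) %% a); first by rewrite ltn_mod.
apply/eqP; rewrite modnMmr -(eqn_modDr ((a - 1) * m)).
have -> : b * (u * (a - 1) * m) + (a - 1) * m = (k * (a - 1) * m) * a.
  by transitivity ((1 + u * b) * ((a - 1) * m)); [ring | rewrite inv_u; ring].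
have -> : m + (a - 1) * m = m * a by nia.
by rewrite !modnMl.
Qed.

Lemma eq_mod_offset a V m : V = m %[mod a] -> V < m + a -> exists x, a * x + V = m.
Proof.
move=> eV lt_V; have le_Vm : V <= m.
  rewrite leqNgt; apply/negP => lt_mV.
  have /dvdnP [[|t] e] : a %| V - m by rewrite -eqn_mod_dvd ?eV // ltnW.
  - lia.
  - nia.
have /dvdnP [t e] : a %| m - V by rewrite -eqn_mod_dvd ?eV.
by exists t; lia.
Qed.

Section ThreeGenerators.

Variables a b c p q : nat.
Hypotheses (a_gt0 : 0 < a) (c_gt0 : 0 < c) (coprime_ab : coprime a b).
Hypothesis c_def : c + q * a = p * b.

Lemma weight_eq y z : b * y + c * z + q * a * z = b * (y + p * z).
Proof. by rewrite -addnA -mulnDl c_def; ring. Qed.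

Lemma weight_mod y z : b * y + c * z = b * (y + p * z) %[mod a].
Proof. by rewrite -weight_eq [in RHS]addnC mulnAC modnMDl. Qed.

Lemma weight_lower y z : c * (y + p * z) <= p * (b * y + c * z).
Proof.
have le_cpb : c <= p * b by rewrite -c_def leq_addr.
have := leq_mul le_cpb (leqnn y); nia.
Qed.

Definition two_reps_below n Y := exists y1 z1 y2 z2,
  [/\ (y1, z1) != (y2, z2), y1 + p * z1 = Y %[mod a], y2 + p * z2 = Y %[mod a],
      b * y1 + c * z1 <= n + a & b * y2 + c * z2 <= n + a].

Lemma dnat_gt1_of_two_reps n : (forall Y, Y < a -> two_reps_below n Y) ->
  forall m, n < m -> 1 < dnat [:: a; b; c] m.
Proof.
move=> reps m lt_nm; have [Y lt_Ya bY] := coprime_modM_surj m a_gt0 coprime_ab.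
have [y1 [z1 [y2 [z2 [ne e1 e2 w1 w2]]]]] := reps Y lt_Ya.
have fit y z : y + p * z = Y %[mod a] -> b * y + c * z <= n + a ->
    exists x, a * x + (b * y + c * z) = m.
  move=> eY w; apply: eq_mod_offset; last lia.
  by rewrite weight_mod -modnMmr eY modnMmr.
have [x1 r1] := fit _ _ e1 w1; have [x2 r2] := fit _ _ e2 w2.
have b_gt0 : 0 < b by case: (b) c_def => //; rewrite muln0; lia.
by apply: (dnat3_gt1 (x1 := x1) (x2 := x2) a_gt0 b_gt0 c_gt0 _ _ ne); rewrite -addnA.
Qed.

Lemma two_reps_lift n Y y z : y + p * z = Y + a -> b * Y <= n + a ->
  b * y + c * z <= n + a -> two_reps_below n Y.
Proof.
move=> e wY w; exists Y, 0, y, z; split=> //.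
- by apply/eqP => -[eY ez]; move: e; rewrite -eY -ez muln0; lia.
- by rewrite muln0 addn0.
- by rewrite e modnDr.
- by rewrite muln0 addn0.
Qed.

Lemma two_reps_carry n y z : b * y + c * z.+1 <= n + a ->
  b * (y + p) + c * z <= n + a -> two_reps_below n (y + p * z.+1).
Proof.
move=> w1 w2; exists y, z.+1, (y + p), z; split=> //.
- by apply/eqP => -[_]; lia.
- by rewrite mulnS; congr (_ %% a); ring.
Qed.

Lemma dnat_le1_of_bounds n Y zs : Y < a -> Y < p -> Y + a < p * zs.+1 ->
  n + a + q * a * zs = b * (Y + a) -> p * n < c * (Y + 2 * a) ->
  dnat [:: a; b; c] n <= 1.
Proof.
move=> lt_Ya lt_Yp lt_zs n_def n_small.
suff rep_eq x y z : a * x + b * y + c * z = n -> y = Y /\ z = 0.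
  apply: dnat3_le1 => x y z x' y' z' e e'.
  have [[ey ez] [ey' ez']] := (rep_eq _ _ _ e, rep_eq _ _ _ e'); subst y z y' z'.
  by congr (_, _, _); apply/eqP; rewrite -(eqn_pmul2l a_gt0); apply/eqP; lia.
move=> rep; set N := y + p * z.
have /(coprime_modMl coprime_ab) : b * N = b * Y %[mod a].
  rewrite -weight_mod -(modnMDl x) mulnC addnA rep.
  by rewrite -(modnMDl (1 + q * zs)) -(modnMDl b (b * Y)); congr (_ %% a); nia.
rewrite (modn_small lt_Ya) => N_mod.
have N_def : N = N %/ a * a + Y by rewrite {1}(divn_eq N a) N_mod.
have w := weight_eq y z; have wl := weight_lower y z.
case: (N %/ a) N_def => [|[|t]] N_def.
- rewrite mul0n add0n /N in N_def; case: z N_def {w wl rep N N_mod} => [|z].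
    by rewrite muln0 addn0.
  by rewrite mulnS; lia.
- have le_z : z <= zs.
    rewrite -ltnS -(ltn_pmul2l (leq_ltn_trans (leq0n Y) lt_Yp)).
    by apply: leq_ltn_trans lt_zs; rewrite /N in N_def; lia.
  have le_qz : q * a * z <= q * a * zs by rewrite leq_mul2l le_z orbT.
  by rewrite /N mul1n [a + _]addnC in N_def; rewrite N_def -n_def in w; lia.
- have le_YN : Y + 2 * a <= N by rewrite N_def !mulSn; lia.
  have : c * (Y + 2 * a) <= c * N by rewrite leq_mul2l le_YN orbT.
  have : p * (b * y + c * z) <= p * n by rewrite leq_mul2l; apply/orP; right; lia.
  by rewrite /N; lia.
Qed.

Lemma p_gt0 : 0 < p.
Proof.
have : 0 < p * b by rewrite -c_def addn_gt0 c_gt0.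
by rewrite muln_gt0 => /andP [].
Qed.

Hypotheses (q2p : 2 * q <= p) (a2b : 2 * a <= b).

Lemma c_lower : p * (2 * b - a) <= 2 * c.
Proof.
have : 2 * q * a <= p * a by rewrite leq_mul2r q2p orbT.
by rewrite mulnBr; nia.
Qed.

Lemma a_le_c : a <= c.
Proof.
have : 1 * (2 * b - a) <= p * (2 * b - a) by rewrite leq_mul2r p_gt0 orbT.
by have := c_lower; lia.
Qed.

Lemma pb_le_2c : p * b <= 2 * c.
Proof. by apply: leq_trans c_lower; rewrite leq_mul2l; apply/orP; right; lia. Qed.

Lemma qa_le_c : q * a <= c.
Proof.
have : 2 * q * a <= p * b by apply: leq_mul q2p _; lia.
by rewrite -c_def; lia.
Qed.

(* With [weight_lower], every pair of level [N + p * k] then weighs more than [n]. *)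
Lemma weight_bound_level n N k : 2 * n < (2 * b - a) * N + 2 * c * k ->
  p * n < c * (N + p * k).
Proof.
move=> lt_n; have : p * (2 * n) < p * ((2 * b - a) * N + 2 * c * k) by rewrite ltn_pmul2l ?p_gt0.
have : p * (2 * b - a) * N <= 2 * c * N by rewrite leq_mul2r c_lower orbT.
nia.
Qed.

Lemma frobenius_p_large : 2 * a <= p ->
  is_pFrobenius 1 [:: a; b; c] ((2 * a%:Z - 1) * b%:Z - a%:Z)%R.
Proof.
move=> ap; set n := (2 * a - 1) * b - a.
have le_a : a <= (2 * a - 1) * b by nia.
have -> : ((2 * a%:Z - 1) * b%:Z - a%:Z = n%:Z)%R.
  by rewrite /n -subzn // PoszM -subzn ?PoszM //; lia.
apply: is_pFrobenius_nat.
- apply: (@dnat_le1_of_bounds n a.-1 0); rewrite ?muln1; try lia.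
    by rewrite muln0 addn0 subnK // mulnC; congr (_ * _); lia.
  by rewrite -[_ + 2 * a]addn0 -(muln0 p); apply: weight_bound_level; rewrite /n; nia.
- apply: dnat_gt1_of_two_reps => Y lt_Ya.
  apply: (@two_reps_lift _ _ (Y + a) 0); first by rewrite muln0 addn0.
  - by rewrite /n subnK // mulnC leq_mul2r; apply/orP; right; lia.
  - by rewrite /n subnK // muln0 addn0 mulnC leq_mul2r; apply/orP; right; lia.
Qed.

Lemma two_reps_mid n Y : Y < a -> a <= p -> b * p <= n + a + b ->
  b * (2 * a - p) + c <= n + a + b -> two_reps_below n Y.
Proof.
move=> lt_Ya le_ap wb wc.
have le_bp k : k < p -> b * k <= n + a.
  move=> lt_kp; have : b * k.+1 <= b * p by rewrite leq_mul2l lt_kp orbT.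
  by rewrite mulnS; lia.
case: (ltnP (Y + a) p) => [lt_p|le_p].
- apply: (@two_reps_lift _ _ (Y + a) 0); rewrite ?muln0 ?addn0 ?le_bp //; lia.
- apply: (@two_reps_lift _ _ (Y + a - p) 1); rewrite ?muln1 ?subnK ?le_bp //; try lia.
  have : b * (Y + a - p).+1 <= b * (2 * a - p) by rewrite leq_mul2l; apply/orP; right; lia.
  by rewrite mulnS; lia.
Qed.

Lemma frobenius_p_mid_qa_ge : a < p <= 2 * a -> (2 * a - p) * b <= q * a ->
  is_pFrobenius 1 [:: a; b; c] ((p%:Z - 1) * b%:Z - a%:Z)%R.
Proof.
move=> /andP [lt_ap le_p2a] qa_ge; set n := (p - 1) * b - a.
have le_a : a <= (p - 1) * b by clear -lt_ap a2b a_gt0; nia.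
have -> : ((p%:Z - 1) * b%:Z - a%:Z = n%:Z)%R.
  by rewrite /n -subzn // PoszM -subzn //; lia.
have n_def : n + a = (p - 1) * b by rewrite /n subnK.
apply: is_pFrobenius_nat.
- apply: (@dnat_le1_of_bounds n (p - 1 - a) 0); rewrite ?muln1; try lia.
    by rewrite muln0 addn0 n_def mulnC; congr (_ * _); lia.
  rewrite -[_ + 2 * a]addn0 -(muln0 p); apply: weight_bound_level.
  by rewrite /n; clear -lt_ap le_p2a a2b a_gt0; nia.
- apply: dnat_gt1_of_two_reps => Y lt_Ya.
  by apply: two_reps_mid; rewrite ?n_def; lia.
Qed.

Lemma frobenius_p_mid_qa_le : a < p < 2 * a -> q * a <= (2 * a - p) * b ->
  is_pFrobenius 1 [:: a; b; c] ((2 * a%:Z - p%:Z - 1) * b%:Z + c%:Z - a%:Z)%R.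
Proof.
move=> /andP [lt_ap lt_p2a] qa_le; set n := (2 * a - p - 1) * b + c - a.
have le_a := leq_trans a_le_c (leq_addl ((2 * a - p - 1) * b) c).
have -> : ((2 * a%:Z - p%:Z - 1) * b%:Z + c%:Z - a%:Z = n%:Z)%R.
  by rewrite /n -subzn // PoszD PoszM -!subzn //; lia.
have n_def : n + a = (2 * a - p - 1) * b + c by rewrite /n subnK.
apply: is_pFrobenius_nat.
- apply: (@dnat_le1_of_bounds n a.-1 1); try lia.
    rewrite n_def -addnA muln1 c_def -mulnDl mulnC; congr (_ * _); lia.
  rewrite (_ : a.-1 + 2 * a = (a.-1 + 2 * a - p) + p * 1); last lia.
  apply: weight_bound_level.
  by rewrite /n; move: a_le_c; clear -lt_ap lt_p2a a2b a_gt0; nia.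
- apply: dnat_gt1_of_two_reps => Y lt_Ya.
  have e : (2 * a - p - 1) * b + b = (2 * a - p) * b by rewrite -mulSnr; congr (_ * _); lia.
  apply: two_reps_mid; rewrite ?n_def; lia.
Qed.

Lemma two_reps_small n r h Y : a = r * p + h -> 0 < h <= p -> Y < a ->
  b * (p - 1) + c * r <= n + a -> b * h + c * r.+1 <= n + a + b ->
  b * (h + p) + c * r <= n + a + b + c -> two_reps_below n Y.
Proof.
move=> a_def /andP [h_gt0 le_hp] lt_Ya w1 w2 w3.
have le_bp y : y < p -> b * y <= b * (p - 1) by move=> lt_yp; rewrite leq_mul2l; apply/orP; right; lia.
have := divn_eq Y p; have := ltn_mod Y p; rewrite p_gt0.
case: (Y %/ p) => [|z] lt_y; set y := Y %% p => Y_def.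
- rewrite mul0n add0n in Y_def.
  have wY : b * Y <= n + a by rewrite Y_def; have := le_bp _ lt_y; lia.
  case: (ltnP (y + h) p) => [lt_yh|le_yh].
  + apply: (@two_reps_lift _ _ (Y + h) r) => //; first lia.
    by have := le_bp (Y + h); rewrite Y_def => /(_ lt_yh); lia.
  + apply: (@two_reps_lift _ _ (Y + h - p) r.+1) => //; first by rewrite mulnS; lia.
    have : b * (Y + h - p).+1 <= b * h by rewrite leq_mul2l; apply/orP; right; lia.
    by rewrite mulnS; lia.
- have lt_zr : z < r.
    have : z.+1 * p < r.+1 * p by rewrite mulSn; lia.
    by rewrite ltn_pmul2r ?p_gt0.
  have cz : c * z.+1 <= c * r by rewrite leq_mul2l lt_zr orbT.
  rewrite Y_def mulnC addnC; apply: two_reps_carry; first by have := le_bp _ lt_y; lia.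
  rewrite mulnDr; case: (ltnP z.+1 r) => [lt_z1r|le_rz1].
  + have : c * z.+2 <= c * r by rewrite leq_mul2l lt_z1r orbT.
    by have := le_bp _ lt_y; have := pb_le_2c; rewrite !mulnS; lia.
  + have r_def : r = z.+1 by lia.
    have : b * y.+1 <= b * h by rewrite leq_mul2l; apply/orP; right; rewrite -r_def in Y_def; lia.
    by rewrite mulnDr r_def in w3; rewrite !mulnS; lia.
Qed.

Lemma frobenius_p_small_qa_le r h : a = r * p + h -> 0 < h <= p -> 0 < r ->
  q * a <= h * b ->
  is_pFrobenius 1 [:: a; b; c] ((h%:Z - 1) * b%:Z + (r%:Z + 1) * c%:Z - a%:Z)%R.
Proof.
move=> a_def /andP [h_gt0 le_hp] r_gt0 qa_le; set n := (h - 1) * b + r.+1 * c - a.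
have le_pa : p <= r * p by rewrite leq_pmull.
have le_a : a <= (h - 1) * b + r.+1 * c.
  by apply: leq_trans a_le_c _; rewrite mulSn addnCA leq_addr.
have -> : ((h%:Z - 1) * b%:Z + (r%:Z + 1) * c%:Z - a%:Z = n%:Z)%R.
  by rewrite /n -subzn // PoszD !PoszM -!subzn //; lia.
have n_def : n + a = (h - 1) * b + r.+1 * c by rewrite /n subnK.
have p_gt0 := p_gt0; have a_le_c := a_le_c.
apply: is_pFrobenius_nat.
- apply: (@dnat_le1_of_bounds n (p - 1) r.+1); rewrite ?mulnS; try lia.
    have : r.+1 * (c + q * a) = r.+1 * (p * b) by rewrite c_def.
    by move: n_def a_def; clear -h_gt0 p_gt0; nia.
  rewrite (_ : p - 1 + 2 * a = (a + h - 1) + p * r.+1); last by rewrite mulnS; lia.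
  apply: weight_bound_level; rewrite /n.
  by clear -h_gt0 le_hp p_gt0 r_gt0 a_def a2b a_le_c; nia.
- have hb : (h - 1) * b + b = h * b by rewrite -mulSnr; congr (_ * _); lia.
  have pb : b * (p - 1) + b = p * b by rewrite mulnC -mulSnr; congr (_ * _); lia.
  have pb2c := pb_le_2c; apply: dnat_gt1_of_two_reps => Y lt_Ya.
  by apply: (@two_reps_small _ r h) => //; rewrite ?h_gt0 ?n_def ?mulnDr ?mulSn; lia.
Qed.

Lemma frobenius_p_small_qa_gt r h : a = r * p + h -> 0 < h <= p -> 0 < r ->
  h * b < q * a ->
  is_pFrobenius 1 [:: a; b; c] ((p%:Z - 1) * b%:Z + r%:Z * c%:Z - a%:Z)%R.
Proof.
move=> a_def /andP [h_gt0 le_hp] r_gt0 qa_gt; set n := (p - 1) * b + r * c - a.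
have p_gt0 := p_gt0; have a_le_c := a_le_c; have qa_le_c := qa_le_c.
have lt_hp : h < p.
  rewrite ltn_neqAle le_hp andbT; apply/eqP => hp; rewrite hp in qa_gt; lia.
have le_pa : p <= r * p by rewrite leq_pmull.
have le_a : a <= (p - 1) * b + r * c.
  by apply: leq_trans a_le_c _; apply: leq_trans (leq_addl _ _); rewrite leq_pmull.
have -> : ((p%:Z - 1) * b%:Z + r%:Z * c%:Z - a%:Z = n%:Z)%R.
  by rewrite /n -subzn // PoszD !PoszM -!subzn //; lia.
have n_def : n + a = (p - 1) * b + r * c by rewrite /n subnK.
apply: is_pFrobenius_nat.
- apply: (@dnat_le1_of_bounds n (p - 1 - h) r); rewrite ?mulnS; try lia.
    have : r * (c + q * a) = r * (p * b) by rewrite c_def.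
    by move: n_def a_def; clear -lt_hp p_gt0; nia.
  rewrite (_ : p - 1 - h + 2 * a = (a + p - 1) + p * r); last lia.
  apply: weight_bound_level; rewrite /n.
  by clear -h_gt0 lt_hp p_gt0 r_gt0 a_def a2b a_le_c le_pa; nia.
- have pb : b * (p - 1) + b = p * b by rewrite mulnC -mulSnr; congr (_ * _); lia.
  apply: dnat_gt1_of_two_reps => Y lt_Ya.
  by apply: (@two_reps_small _ r h) => //; rewrite ?h_gt0 ?n_def ?mulnDr ?mulSn; lia.
Qed.

Lemma frobenius_p_small r : 0 < r -> r * p < a <= r.+1 * p ->
  is_pFrobenius 1 [:: a; b; c]
    (if q%:Z * a%:Z <= (a%:Z - r%:Z * p%:Z) * b%:Z
     then (a%:Z - r%:Z * p%:Z - 1) * b%:Z + (r%:Z + 1) * c%:Z - a%:Z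
     else (p%:Z - 1) * b%:Z + r%:Z * c%:Z - a%:Z)%R.
Proof.
move=> r_gt0 /andP [lt_rpa le_a]; set h := a - r * p.
have a_def : a = r * p + h by rewrite /h subnKC // ltnW.
have h_range : 0 < h <= p by apply/andP; split; lia.
have -> : (a%:Z - r%:Z * p%:Z = h%:Z)%R by rewrite -PoszM subzn // ltnW.
rewrite -!PoszM lez_nat; case: ifP => [qa_le | /negbT qa_gt].
- exact: frobenius_p_small_qa_le.
- by apply: (@frobenius_p_small_qa_gt r h); rewrite // ltnNge.
Qed.

End ThreeGenerators.

Lemma fib_expand j : [/\ fib j.+2 = fib j + fib j.+1, fib j.+3 = fib j + 2 * fib j.+1,
  fib j.+4 = 2 * fib j + 3 * fib j.+1, fib j.+4.+1 = 3 * fib j + 5 * fib j.+1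
  & fib j.+4.+2 = 5 * fib j + 8 * fib j.+1].
Proof. by rewrite !fibSS; split; lia. Qed.

Lemma double_lucas_le_fib n : 2 * lucas n.+1 <= fib n.+4.+1.
Proof.
have [e2 _ _ e5 _] := fib_expand n; have := leq_fib (leqnSn n).
by rewrite lucas_fib e2 e5; lia.
Qed.

Lemma lucas_weight i k : 2 <= k ->
  lucas (i + k) + fib k.-2 * lucas i = fib k * lucas (i + 2).
Proof. by case: k => [|[|k]] // _; rewrite addn2 fib_mul_lucas. Qed.

Local Open Scope ring_scope.

Lemma lucas_frobenius_far i k : (0 < i)%N -> (i + 4 <= k)%N ->
  is_pFrobenius 1 [:: lucas i; lucas (i + 2); lucas (i + k)]
    ((2 * (lucas i)%:Z - 1) * (lucas (i + 2))%:Z - (lucas i)%:Z).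
Proof.
move=> i_gt0 le_k; apply: (@frobenius_p_large _ _ _ (fib k) (fib k.-2));
  rewrite ?lucas_gt0 ?coprime_lucas_add2 ?lucas_weight ?double_fib_le ?double_lucas_le //; try lia.
apply: leq_trans (leq_fib le_k); case: i i_gt0 {le_k} => // i _.
by rewrite addn4; apply: double_lucas_le_fib.
Qed.

Lemma lucas_frobenius_2i3 i : (3 <= i)%N ->
  is_pFrobenius 1 [:: lucas i; lucas (i + 2); lucas (2 * i + 3)]
    (((fib (i + 3))%:Z - 1) * (lucas (i + 2))%:Z - (lucas i)%:Z).
Proof.
move=> le3i; rewrite (_ : (2 * i + 3 = i + (i + 3))%N); last lia.
have e : ((i + 3).-2 = i.+1)%N by lia.
apply: (@frobenius_p_mid_qa_ge _ _ _ (fib (i + 3)) (fib (i + 3).-2));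
  rewrite ?lucas_gt0 ?coprime_lucas_add2 ?lucas_weight ?double_fib_le ?double_lucas_le //; try lia.
all: rewrite ?e; case: i le3i {e} => [|[|[|j]]] // _; rewrite ?addn2 ?addn3.
all: have [e2 e3 e4 e5 e6] := fib_expand j; have := leq_fib (leqnSn j); have := fib_gt0 j.
all: rewrite !lucas_fib ?e2 ?e3 ?e4 ?e5 ?e6.
all: nia.
Qed.

Lemma lucas_frobenius_2i2 i : (3 <= i)%N ->
  is_pFrobenius 1 [:: lucas i; lucas (i + 2); lucas (2 * i + 2)]
    ((3 * (fib i.-1)%:Z - 1) * (lucas (i + 2))%:Z + (lucas (2 * i + 2))%:Z - (lucas i)%:Z).
Proof.
move=> le3i; rewrite (_ : (2 * i + 2 = i + (i + 2))%N); last lia.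
have -> : 3 * (fib i.-1)%:Z = 2 * (lucas i)%:Z - (fib (i + 2))%:Z.
  case: i le3i => [|[|[|j]]] // _; have [e2 _ e4 e5 _] := fib_expand j.
  by rewrite succnK addn2 lucas_fib e2 e4 e5; lia.
have e : ((i + 2).-2 = i)%N by lia.
apply: (@frobenius_p_mid_qa_le _ _ _ (fib (i + 2)) (fib (i + 2).-2));
  rewrite ?lucas_gt0 ?coprime_lucas_add2 ?lucas_weight ?double_fib_le ?double_lucas_le //; try lia.
all: rewrite ?e; case: i le3i {e} => [|[|[|j]]] // _; rewrite ?addn2.
all: have [e2 e3 e4 e5 e6] := fib_expand j; have := leq_fib (leqnSn j); have := fib_gt0 j.
all: rewrite !lucas_fib ?e2 ?e3 ?e4 ?e5 ?e6.
all: nia.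
Qed.

Lemma lucas_frobenius_near i k (r := ((lucas i).-1 %/ fib k)%N) :
  (0 < i)%N -> (3 <= k)%N -> (1 <= r)%N ->
  is_pFrobenius 1 [:: lucas i; lucas (i + 2); lucas (i + k)]
    (if (fib k.-2)%:Z * (lucas i)%:Z <= ((lucas i)%:Z - r%:Z * (fib k)%:Z) * (lucas (i + 2))%:Z
     then ((lucas i)%:Z - r%:Z * (fib k)%:Z - 1) * (lucas (i + 2))%:Z
          + (r%:Z + 1) * (lucas (i + k))%:Z - (lucas i)%:Z
     else ((fib k)%:Z - 1) * (lucas (i + 2))%:Z + r%:Z * (lucas (i + k))%:Z - (lucas i)%:Z).
Proof.
move=> i_gt0 le3k r_gt0; have p_gt0 : (0 < fib k)%N by apply: leq_trans (leq_fib le3k).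
have := divn_eq (lucas i).-1 (fib k); have := ltn_mod (lucas i).-1 (fib k).
rewrite p_gt0 -/r => lt_mod a_def.
by apply: frobenius_p_small;
  rewrite ?lucas_gt0 ?coprime_lucas_add2 ?lucas_weight ?double_fib_le ?double_lucas_le //; lia.
Qed.

Theorem theorem6 (i k : nat) (hi : (3 <= i)%N) (hk : (3 <= k)%N) :
  let F := fun n : nat => (fib n)%:Z in
  let L := fun n : nat => (lucas n)%:Z in
  let r := ((lucas i).-1 %/ fib k)%N in
  [/\ ((i + 4 <= k)%N ->
        is_pFrobenius 1 [:: lucas i; lucas (i + 2); lucas (i + k)]
          ((2 * L i - 1) * L (i + 2)%N - L i)),
      is_pFrobenius 1 [:: lucas i; lucas (i + 2); lucas (2 * i + 3)]
          ((F (i + 3)%N - 1) * L (i + 2)%N - L i),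
      is_pFrobenius 1 [:: lucas i; lucas (i + 2); lucas (2 * i + 2)]
          ((3 * F i.-1 - 1) * L (i + 2)%N + L (2 * i + 2)%N - L i)
    & ((1 <= r)%N ->
        is_pFrobenius 1 [:: lucas i; lucas (i + 2); lucas (i + k)]
          (if F k.-2 * L i <= (L i - r%:Z * F k) * L (i + 2)%N
           then (L i - r%:Z * F k - 1) * L (i + 2)%N + (r%:Z + 1) * L (i + k)%N - L i
           else (F k - 1) * L (i + 2)%N + r%:Z * L (i + k)%N - L i))].
Proof.
have i_gt0 : (0 < i)%N by apply: leq_trans hi.
split.
- exact: lucas_frobenius_far.
- exact: lucas_frobenius_2i3.
- exact: lucas_frobenius_2i2.
- exact: lucas_frobenius_near.
Qed.
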